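(* Let $n\geq 4$, let $e=[1,2,\dots,n]$ be the identity permutation, and let $\mathcal{S}(e,1)=\{\pi\in S_n: d_K(e,\pi)\leq 1\}$. Then the set $\mathcal{A}=\mathcal{S}(e,1)\cup \mathcal{S}(e,1)\circ(1,2)$ is an optimal anticode of diameter $3$ in $S_n$ with respect to the Kendall's $\tau$-distance, and $|\mathcal{A}|=2(n-1)$.
   Context: $S_n$ denotes the set of all permutations of $[n]=\{1,\dots,n\}$, written $\sigma=[\sigma(1),\dots,\sigma(n)]$. Composition is defined by $(\pi\circ\sigma)(i)=\sigma(\pi(i))$. $(1,2)$ denotes the permutation $[2,1,3,4,\dots,n]$, and for a set $\mathcal{S}\subseteq S_n$ and $\pi\in S_n$, $\mathcal{S}\circ\pi=\{\sigma\circ\pi:\sigma\in\mathcal{S}\}$; thus $\sigma\circ(1,2)$ is obtained from $\sigma$ by exchanging the values $1$ and $2$. An adjacent transposition applied to $\sigma$ exchanges the entries in positions $i$ and $i+1$ for some $1\leq i\leq n-1$. The Kendall's $\tau$-distance $d_K(\sigma,\pi)$ is the minimum number of adjacent transpositions needed to transform $\sigma$ into $\pi$. An anticode of diameter $D$ is a subset $\mathcal{A}\subseteq S_n$ with $d_K(x,y)\leq D$ for all $x,y\in\mathcal{A}$; it is optimal if it has the largest possible size among all anticodes of diameter $D$ in $S_n$. *)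

(* Permutations of [n] are modelled as 'S_n = {perm 'I_n}
   (values/positions 0..n-1 instead of 1..n).  A permutation s is read as the
   word [s 0, ..., s (n-1)].  MathComp's product (s * t) x = t (s x), which is
   exactly the paper's composition s∘t. *)
From mathcomp Require Import all_boot all_order all_fingroup.
Set Implicit Arguments. Unset Strict Implicit. Unset Printing Implicit Defensive.
Local Open Scope group_scope.

(* t is obtained from s by exchanging the entries in positions i and i+1:
   t(x) = s(tperm i (i+1) x), i.e. t = (i,i+1) ∘ s in the paper's notation. *)
Definition adj_step (n : nat) (s t : 'S_n) : bool :=
  [exists i : 'I_n, exists j : 'I_n,
     (nat_of_ord j == (nat_of_ord i).+1) && (t == tperm i j * s)].

Fixpoint reach (n : nat) (k : nat) (s t : 'S_n) : bool :=
  match k with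
  | 0 => s == t
  | k'.+1 => [exists u : 'S_n, adj_step s u && reach k' u t]
  end.

Definition kendall_le (n : nat) (s t : 'S_n) (D : nat) : bool :=
  [exists k : 'I_D.+1, reach k s t].

Definition kball (n : nat) (r : nat) : {set 'S_n} :=
  [set p : 'S_n | kendall_le 1 p r].

Definition anticode (n : nat) (A : {set 'S_n}) (D : nat) : Prop :=
  forall x y, x \in A -> y \in A -> kendall_le x y D.

Definition optimal_anticode (n : nat) (A : {set 'S_n}) (D : nat) : Prop :=
  anticode A D /\ forall B : {set 'S_n}, anticode B D -> #|B| <= #|A|.

From mathcomp Require Import all_boot all_order all_fingroup.
From mathcomp Require Import zify.
Set Implicit Arguments. Unset Strict Implicit. Unset Printing Implicit Defensive.

(* Encode a permutation by its inversion set.  An adjacent transposition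
   toggles exactly one inversion, so the parity of the number of inversions
   flips at each step and the inversion sets of two permutations at distance k
   differ in at most k pairs.  Split an anticode of diameter 3 by parity and
   translate a class so that it contains the identity: every other member then
   has length exactly 2, and its inversion set is a 2-set; two such sets meet,
   since they differ in at most 3 pairs.  A pairwise meeting family of 2-sets is
   a star or a triangle.  In the graph formed by these 2-sets every vertex has
   degree at most n-2, and a triangle needs n >= 5, so each class has at most
   n-1 members and the anticode at most 2(n-1).  Conversely, the n-1 adjacent
   transpositions and their translates by (1,2) lie in the given set and have
   different parities. *)


Section PairFamilies.
Variable T : finType.
Implicit Types (x y z p : T) (J : {set T}) (K : {set {set T}}).

Lemma set2_eq J x y : #|J| = 2 -> x \in J -> y \in J -> x != y -> J = [set x; y].
Proof.
move=> cJ xJ yJ xy; apply/eqP; rewrite eq_sym eqEcard cards2 xy cJ leqnn andbT.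
by apply/subsetP => u /set2P [] ->.
Qed.

Lemma cards3_le x y z : #|[set x; y; z]| <= 3.
Proof. by rewrite -setUA cardsU1 cards2; case: (_ \notin _); case: (y != z). Qed.

Lemma intersecting_pairs K : K != set0 ->
  {in K, forall J, #|J| = 2} -> {in K &, forall J1 J2, J1 :&: J2 != set0} ->
  (exists p, {in K, forall J, p \in J}) \/
  exists x y z, [/\ [set x; y] \in K, [set x; z] \in K, [set y; z] \in K &
                    K \subset [set [set x; y]; [set x; z]; [set y; z]]].
Proof.
move=> /set0Pn [J0 J0K] c2 meet.
have meetP J1 J2 : J1 \in K -> J2 \in K -> exists2 t, t \in J1 & t \in J2.
  by move=> J1K J2K; have /set0Pn [t] := meet _ _ J1K J2K; rewrite inE => /andP []; exists t.
have /cards2P [x [y [xy eJ0]]] : #|J0| == 2 by rewrite c2.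
case: (boolP [forall J in K, x \in J]) => [/forall_inP|/forall_inPn [J1 J1K xJ1]].
  by left; exists x.
case: (boolP [forall J in K, y \in J]) => [/forall_inP|/forall_inPn [J2 J2K yJ2]].
  by left; exists y.
have yJ1 : y \in J1.
  by have [t] := meetP _ _ J0K J1K; rewrite eJ0 => /set2P [] ->; rewrite ?(negbTE xJ1).
have xJ2 : x \in J2.
  by have [t] := meetP _ _ J0K J2K; rewrite eJ0 => /set2P [] ->; rewrite ?(negbTE yJ2).
have [z zJ1 zJ2] := meetP _ _ J1K J2K.
have zx : z != x by apply: contraNneq xJ1 => <-.
have zy : z != y by apply: contraNneq yJ2 => <-.
have eJ1 : J1 = [set y; z] by apply: set2_eq; rewrite ?c2 // eq_sym.
have eJ2 : J2 = [set x; z] by apply: set2_eq; rewrite ?c2 // eq_sym.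
right; exists x, y, z; rewrite -eJ0 -eJ1 -eJ2; split => //.
apply/subsetP => J JK; rewrite !inE.
have [t tJ] := meetP _ _ JK J0K; rewrite eJ0 => /set2P [] et; subst t.
- have [t tJ'] := meetP _ _ JK J1K; rewrite eJ1 => /set2P [] et; subst t.
    by rewrite (set2_eq (c2 _ JK) tJ tJ' xy) -eJ0 eqxx.
  by rewrite (set2_eq (c2 _ JK) tJ tJ' _) -?eJ2 ?eqxx ?orbT // eq_sym.
- have [t tJ'] := meetP _ _ JK J2K; rewrite eJ2 => /set2P [] et; subst t.
    by rewrite (set2_eq (c2 _ JK) tJ' tJ xy) -eJ0 eqxx.
  by rewrite (set2_eq (c2 _ JK) tJ tJ' _) -?eJ1 ?eqxx ?orbT // eq_sym.
Qed.

End PairFamilies.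

Lemma odd_card_toggle (T : finType) (X Y : {set T}) p :
  (forall q, (q \in X) = (q \in Y) (+) (q == p)) -> odd #|X| = ~~ odd #|Y|.
Proof.
move=> XE; case pY: (p \in Y).
- have -> : X = Y :\ p.
    by apply/setP => q; rewrite XE !inE; case: eqP => [->|]; rewrite ?pY ?addbT ?addbF.
  by rewrite (cardsD1 p Y) pY negbK.
- have -> : X = p |: Y.
    by apply/setP => q; rewrite XE !inE; case: eqP => [->|]; rewrite ?pY ?addbT ?addbF.
  by rewrite cardsU1 pY.
Qed.

Section KendallSteps.
Local Open Scope group_scope.
Variable n : nat.
Implicit Types s t u x y g : 'S_n.

Lemma adj_stepP s t :
  reflect (exists i j : 'I_n, j = i.+1 :> nat /\ t = tperm i j * s) (adj_step s t).
Proof.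
apply: (iffP existsP) => [[i /existsP [j /andP [/eqP hj /eqP ->]]]|[i [j [hj ->]]]].
  by exists i, j.
by exists i; apply/existsP; exists j; rewrite hj !eqxx.
Qed.

Lemma adj_step_sym s t : adj_step s t -> adj_step t s.
Proof.
case/adj_stepP => i [j [hj ->]]; apply/adj_stepP; exists i, j.
by rewrite mulgA tperm2 mul1g.
Qed.

Lemma adj_step_mulr s t g : adj_step s t -> adj_step (s * g) (t * g).
Proof. by case/adj_stepP => i [j [hj ->]]; apply/adj_stepP; exists i, j; rewrite mulgA. Qed.

Lemma reach1 s t : adj_step s t -> reach 1 s t.
Proof. by move=> st; apply/existsP; exists t; rewrite st /=. Qed.

Lemma reach_cat k l s t u : reach k s t -> reach l t u -> reach (k + l) s u.
Proof.
elim: k s => [|k IH] s /=; first by move/eqP->.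
by case/existsP => v /andP [sv vt] tu; apply/existsP; exists v; rewrite sv IH.
Qed.

Lemma reach_sym k s t : reach k s t -> reach k t s.
Proof.
elim: k s t => [|k IH] s t; first by rewrite /= eq_sym.
case/existsP => u /andP [su ut]; rewrite -addn1.
exact: reach_cat (IH _ _ ut) (reach1 (adj_step_sym su)).
Qed.

Lemma reach_mulr k s t g : reach k s t -> reach k (s * g) (t * g).
Proof.
elim: k s => [|k IH] s /=; first by move/eqP->.
case/existsP => u /andP [su ut]; apply/existsP; exists (u * g).
by rewrite adj_step_mulr // IH.
Qed.

Lemma kendall_leP s t D : reflect (exists2 k, k <= D & reach k s t) (kendall_le s t D).
Proof.
apply: (iffP existsP) => [[k st]|[k kD st]]; first by exists k => //; rewrite -ltnS.
by exists (Ordinal (kD : k < D.+1)).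
Qed.

Lemma anticode_mulr (C : {set 'S_n}) D g :
  anticode C D -> anticode [set x * g | x in C] D.
Proof.
move=> hC _ _ /imsetP [x xC ->] /imsetP [y yC ->].
have /kendall_leP [k kD xy] := hC _ _ xC yC.
by apply/kendall_leP; exists k => //; apply: reach_mulr.
Qed.

End KendallSteps.

Section InversionSets.
Local Open Scope group_scope.
Variable n : nat.
Implicit Types s t x y : 'S_n.

(* Inversions are recorded by values: (u, v) with u < v such that v occurs
   before u in the word [x 0, ..., x (n-1)]. *)
Definition inv_set x : {set 'I_n * 'I_n} :=
  [set q : 'I_n * 'I_n | (q.1 < q.2) && (x^-1 q.2 < x^-1 q.1)].

Definition minmax_pair (u v : 'I_n) : 'I_n * 'I_n := if u < v then (u, v) else (v, u).

Lemma inv_set1 : inv_set 1 = set0.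
Proof. by apply/setP => q; rewrite !inE invg1 !perm1; case: ltngtP. Qed.

Lemma inv_set_tpermM s (i j : 'I_n) : j = i.+1 :> nat ->
  forall q, (q \in inv_set (tperm i j * s)) =
            (q \in inv_set s) (+) (q == minmax_pair (s i) (s j)).
Proof.
move=> hj [u v]; rewrite !inE /= invMg tpermV !permM.
set A := s^-1 u; set B := s^-1 v.
have -> : u = s A by rewrite /A permKV.
have -> : v = s B by rewrite /B permKV.
clearbody A B; rewrite /minmax_pair.
have ij : i != j by apply/eqP => e; move: hj; rewrite e; lia.
have sij : s i != s j by rewrite (inj_eq perm_inj).
case: (ltngtP (s i) (s j)) => hs; try by move: sij; rewrite -val_eqE /= hs eqxx.
all: rewrite xpair_eqE !(inj_eq perm_inj).
all: case: (eqVneq A i) => [?|?]; case: (eqVneq A j) => [?|?];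
  case: (eqVneq B i) => [?|?]; case: (eqVneq B j) => [?|?]; subst;
  rewrite ?eqxx ?tpermL ?tpermR ?tpermD //= 1?eq_sym //.
all: try by move: ij; rewrite eqxx.
all: repeat match goal with
  | H : is_true (_ != _) |- _ => move: H; rewrite -val_eqE /= => /eqP ?
  end.
all: rewrite ?andbF ?andbT ?addbF ?addbT; lia.
Qed.

Lemma inv_set_tperm (i j : 'I_n) : j = i.+1 :> nat -> inv_set (tperm i j) = [set (i, j)].
Proof.
move=> hj; apply/setP => q; rewrite -[tperm i j]mulg1 inv_set_tpermM // inv_set1 !inE.
by rewrite !perm1 /minmax_pair hj ltnSn.
Qed.

Lemma odd_inv_set_adj_step s t : adj_step s t -> odd #|inv_set t| = ~~ odd #|inv_set s|.
Proof. by case/adj_stepP => i [j [hj ->]]; apply: odd_card_toggle; apply: inv_set_tpermM. Qed.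

Lemma odd_inv_set_reach k s t : reach k s t -> odd #|inv_set t| = odd k (+) odd #|inv_set s|.
Proof.
elim: k s => [|k IH] s /=; first by move/eqP->.
case/existsP => u /andP [su ut]; rewrite (IH _ ut) (odd_inv_set_adj_step su).
by case: (odd k); case: (odd #|inv_set s|).
Qed.

Definition inv_symdiff s t := [set q | (q \in inv_set s) != (q \in inv_set t)].

Lemma card_inv_symdiff_reach k s t : reach k s t -> #|inv_symdiff s t| <= k.
Proof.
elim: k s => [|k IH] s /=.
  by move/eqP->; rewrite leqn0 cards_eq0; apply/eqP/setP => q; rewrite !inE eqxx.
case/existsP => u /andP [/adj_stepP [i [j [hj eu]]] /IH ut].
set p := minmax_pair (s i) (s j).
have sub : inv_symdiff s t \subset p |: inv_symdiff u t.
  apply/subsetP => q; rewrite in_setU1 /inv_symdiff [q \in finset _]in_set [q \in finset _]in_set.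
  rewrite eu inv_set_tpermM // -/p.
  by case: (q =P p) => //= _; rewrite addbF.
apply: leq_trans (subset_leq_card sub) _.
by rewrite cardsU1; case: (p \notin _) ut; lia.
Qed.

Lemma card_ord_lt m : m <= n -> #|[set k : 'I_n | k < m]| = m.
Proof.
move=> mn; have widen_inj : injective (widen_ord mn).
  by move=> a b /(congr1 val) e; apply: val_inj.
rewrite -[RHS]card_ord -(card_imset _ widen_inj).
apply: eq_card => k; rewrite inE; apply/idP/imsetP => [km|[k' _ ->]]; last by rewrite /= ltn_ord.
by exists (Ordinal km) => //; apply: val_inj.
Qed.

Lemma card_perm_lt (r : 'S_n) u : #|[set v | r v < r u]| = r u.
Proof.
have -> : [set v | r v < r u] = r @^-1: [set k : 'I_n | k < r u] by apply/setP => v; rewrite !inE.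
by rewrite card_preimset ?card_ord_lt //; [apply: ltnW | apply: perm_inj].
Qed.

Lemma ltn_permV_inv_set x u v : u != v ->
  (x^-1 v < x^-1 u) = (if v < u then (v, u) \notin inv_set x else (u, v) \in inv_set x).
Proof.
rewrite -val_eqE /= => /eqP uv; rewrite !inE /=.
have : x^-1 u != x^-1 v by rewrite (inj_eq perm_inj) -val_eqE; apply/eqP.
rewrite -val_eqE /= => /eqP; case: (ltngtP v u) => vu; lia.
Qed.

Lemma inv_set_inj : injective inv_set.
Proof.
move=> x y e; apply: invg_inj; apply/permP => u; apply: val_inj => /=.
rewrite -card_perm_lt -[RHS]card_perm_lt; apply: eq_card => v; rewrite !inE.
case: (eqVneq u v) => [->|uv]; first by rewrite !ltnn.
by rewrite !ltn_permV_inv_set // e.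
Qed.

End InversionSets.

Section LengthTwo.
Local Open Scope group_scope.
Variable n : nat.
Implicit Types (x : 'S_n) (p q : 'I_n * 'I_n).

(* [inv2_edge p q] says that {p, q} is the inversion set of a permutation of
   Kendall length 2: two disjoint adjacent pairs, or an adjacent pair (a, a+1)
   together with (a, a+2) or (a-1, a+1). *)
Definition inv2_edge p q : bool :=
  [|| [&& p.2 == p.1.+1 :> nat, q.2 == q.1.+1 :> nat & (p.1.+2 <= q.1) || (q.1.+2 <= p.1)],
      [&& p.2 == p.1.+1 :> nat, q.1 == p.1 :> nat & q.2 == p.1.+2 :> nat],
      [&& p.2 == p.1.+1 :> nat, q.1.+1 == p.1 :> nat & q.2 == p.2 :> nat],
      [&& q.2 == q.1.+1 :> nat, p.1 == q.1 :> nat & p.2 == q.1.+2 :> nat] |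
      [&& q.2 == q.1.+1 :> nat, p.1.+1 == q.1 :> nat & p.2 == q.2 :> nat]].

Lemma inv2_edge_sym p q : inv2_edge p q = inv2_edge q p.
Proof. by rewrite /inv2_edge; apply/idP/idP; lia. Qed.

Lemma inv2_edge_neq p q : inv2_edge p q -> p != q.
Proof. by case: p q => [p1 p2] [q1 q2]; rewrite /inv2_edge xpair_eqE -!val_eqE /=; lia. Qed.

Lemma inv_set_reach2 x : reach 2 1 x -> x != 1 ->
  exists p q, inv_set x = [set p; q] /\ inv2_edge p q.
Proof.
case/existsP => u /andP [/adj_stepP [i [j [hj ->]]]].
case/existsP => w /andP [/adj_stepP [i' [j' [hj' ->]]]] /eqP <- {u w} x1.
rewrite mulg1 in x1 *.
set Q := minmax_pair (tperm i j i') (tperm i j j').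
have Iw q : (q \in inv_set (tperm i' j' * tperm i j)) = (q == (i, j)) (+) (q == Q).
  by rewrite inv_set_tpermM // inv_set_tperm // inE.
have PQ : (i, j) != Q.
  apply: contraNneq x1 => PQ; apply/eqP/inv_set_inj; apply/setP => q.
  by rewrite Iw -PQ addbb inv_set1 inE.
exists (i, j), Q; split.
  by apply/setP => q; rewrite Iw !inE; case: eqP => [->|] /=; rewrite ?(negbTE PQ).
have tij y : nat_of_ord (tperm i j y) =
    if y == i then nat_of_ord j else if y == j then nat_of_ord i else nat_of_ord y.
  by rewrite permE /=; case: (y == i); case: (y == j).
move: PQ; rewrite /Q /minmax_pair; have := ltn_ord j; have := ltn_ord j'.
case: ifP; rewrite /inv2_edge xpair_eqE -!val_eqE /= !tij -!val_eqE /=.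
all: case: (@eqP nat i' i); case: (@eqP nat i' j); case: (@eqP nat j' i); case: (@eqP nat j' j).
all: lia.
Qed.

Lemma inv2_triangle p q r : inv2_edge p q -> inv2_edge p r -> inv2_edge q r -> 5 <= n.
Proof.
have := ltn_ord p.2; have := ltn_ord q.2; have := ltn_ord r.2.
rewrite /inv2_edge; lia.
Qed.

End LengthTwo.

Section InversionGraph.
Variable n : nat.
Hypothesis n_ge4 : 4 <= n.
Implicit Types p q : 'I_n * 'I_n.

(* An adjacent pair (a, a+1) is joined to (b, b+1) for |a - b| >= 2 and to
   (a, a+2), (a-1, a+1); a pair (a, a+2) only to (a, a+1) and (a+1, a+2).
   [star_code p] tells the neighbours of p apart using the values below n-1
   other than [star_gap p]. *)
Definition star_code p q : nat := if q.1 == p.1 :> nat then q.2.-1 else q.1.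

Definition star_gap p : nat :=
  if p.2 == p.1.+1 :> nat then nat_of_ord p.1 else if p.1 == 0 :> nat then 2 else 0.

Lemma star_code_bound p q :
  inv2_edge p q -> star_code p q < n.-1 /\ star_code p q != star_gap p.
Proof.
have := ltn_ord p.2; have := ltn_ord q.2.
rewrite /inv2_edge /star_code /star_gap.
by case: (@eqP nat q.1 p.1); case: (@eqP nat p.2 p.1.+1); case: (@eqP nat p.1 0); lia.
Qed.

Lemma star_code_inj p q q' :
  inv2_edge p q -> inv2_edge p q' -> star_code p q = star_code p q' -> q = q'.
Proof.
case: q q' => [q1 q2] [q1' q2'] /=; rewrite /inv2_edge /star_code /= => e e' eq.
congr pair; apply: val_inj => /=; move: e e' eq.
all: by case: (@eqP nat q1 p.1); case: (@eqP nat q1' p.1); lia.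
Qed.

Lemma card_inv2_nbhd p : #|[set q | inv2_edge p q]| <= n - 2.
Proof.
set N := [set q | inv2_edge p q]; set s := rem (star_gap p) (iota 0 n.-1).
have gap_in : star_gap p \in iota 0 n.-1.
  rewrite mem_iota /star_gap; have := ltn_ord p.2.
  by case: (@eqP nat p.2 p.1.+1); case: (@eqP nat p.1 0); lia.
have codes_uniq : uniq [seq star_code p q | q <- enum N].
  rewrite map_inj_in_uniq ?enum_uniq // => q q'; rewrite !mem_enum !inE.
  exact: star_code_inj.
have codes_sub : {subset [seq star_code p q | q <- enum N] <= s}.
  move=> c /mapP [q + ->]; rewrite mem_enum inE => /star_code_bound [lt ne].
  by rewrite (mem_rem_uniq _ (iota_uniq _ _)) inE ne mem_iota.
have := uniq_leq_size codes_uniq codes_sub.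
rewrite size_map -cardE size_rem // size_iota; lia.
Qed.

End InversionGraph.

Section AnticodeBound.
Local Open Scope group_scope.
Variable n : nat.
Hypothesis n_ge4 : 4 <= n.
Implicit Types (x y : 'S_n) (C : {set 'S_n}).

Lemma card_intersecting_inv2 (K : {set {set 'I_n * 'I_n}}) :
  {in K, forall J, exists p q, J = [set p; q] /\ inv2_edge p q} ->
  {in K &, forall J1 J2, J1 :&: J2 != set0} -> #|K| <= n - 2.
Proof.
move=> edgeK meetK; case: (eqVneq K set0) => [->|K0]; first by rewrite cards0.
have c2 : {in K, forall J : {set 'I_n * 'I_n}, #|J| = 2}.
  by move=> J /edgeK [p [q [-> /inv2_edge_neq pq]]]; rewrite cards2 pq.
case: (intersecting_pairs K0 c2 meetK) => [[p pK]|[x [y [z [xyK xzK yzK sub]]]]].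
  have starK : K \subset [set [set p; q] | q in [set q | inv2_edge p q]].
    apply/subsetP => J JK; have [a [b [eJ ab]]] := edgeK _ JK.
    move: (pK _ JK); rewrite eJ => /set2P [] ->; apply/imsetP.
      by exists b; rewrite ?inE.
    by exists a; rewrite ?inE 1?inv2_edge_sym // setUC.
  apply: leq_trans (subset_leq_card starK) _.
  exact: leq_trans (leq_imset_card _ _) (card_inv2_nbhd n_ge4 p).
have edge2 u v : [set u; v] \in K -> inv2_edge u v.
  move=> uvK; have [a [b [e ab]]] := edgeK _ uvK.
  have : u != v by have := c2 _ uvK; rewrite cards2; case: (u != v).
  have : u \in [set a; b] by rewrite -e set21.
  have : v \in [set a; b] by rewrite -e set22.
  by do 2 case/set2P => ->; rewrite ?eqxx // inv2_edge_sym.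
have := inv2_triangle (edge2 _ _ xyK) (edge2 _ _ xzK) (edge2 _ _ yzK).
have := leq_trans (subset_leq_card sub) (cards3_le _ _ _); lia.
Qed.

Lemma card_inv_set_reach2 x : reach 2 1 x -> x != 1 -> #|inv_set x| = 2.
Proof.
by move=> r x1; have [p [q [-> /inv2_edge_neq pq]]] := inv_set_reach2 r x1; rewrite cards2 pq.
Qed.

Lemma inv_set_reach2_meet x y : reach 2 1 x -> x != 1 -> reach 2 1 y -> y != 1 ->
  kendall_le x y 3 -> inv_set x :&: inv_set y != set0.
Proof.
move=> rx x1 ry y1 /kendall_leP [k k3 /card_inv_symdiff_reach dk].
apply/negP => /eqP xy0.
have : inv_symdiff x y = inv_set x :|: inv_set y.
  apply/setP => q; rewrite /inv_symdiff [q \in finset _]in_set in_setU.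
  have : q \in inv_set x :&: inv_set y = false by rewrite xy0 in_set0.
  by rewrite in_setI; case: (q \in inv_set x); case: (q \in inv_set y).
move=> e; move: dk; rewrite e; have := cardsUI (inv_set x) (inv_set y).
rewrite xy0 cards0 (card_inv_set_reach2 rx x1) (card_inv_set_reach2 ry y1); lia.
Qed.

Lemma card_anticode_length2 C : anticode C 3 -> 1 \in C ->
  {in C, forall x, x != 1 -> reach 2 1 x} -> #|C| <= n.-1.
Proof.
move=> hC C1 len2; set K := [set inv_set x | x in C :\ 1].
have cK : #|K| = #|C :\ 1| := card_imset _ (@inv_set_inj n).
suff : #|K| <= n - 2 by rewrite (cardsD1 1 C) C1 add1n -cK; lia.
apply: card_intersecting_inv2.
  by move=> _ /imsetP [x /setD1P [x1 xC] ->]; apply: inv_set_reach2 (len2 _ xC x1) x1.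
move=> _ _ /imsetP [x /setD1P [x1 xC] ->] /imsetP [y /setD1P [y1 yC] ->].
exact: inv_set_reach2_meet (len2 _ xC x1) x1 (len2 _ yC y1) y1 (hC _ _ xC yC).
Qed.

Lemma card_anticode_parity C : anticode C 3 ->
  {in C &, forall x y, odd #|inv_set x| = odd #|inv_set y|} -> #|C| <= n.-1.
Proof.
move=> hC par; case: (set_0Vmem C) => [->|[c cC]]; first by rewrite cards0.
rewrite -(card_imset C (mulIg c^-1)); apply: card_anticode_length2.
- exact: anticode_mulr.
- by apply/imsetP; exists c; rewrite ?mulgV.
move=> _ /imsetP [x xC ->] x1; have /kendall_leP [k k3 cx] := hC _ _ cC xC.
have k_even : ~~ odd k.
  by have := odd_inv_set_reach cx; rewrite (par _ _ xC cC); case: (odd k); case: odd.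
have := reach_mulr c^-1 cx; rewrite mulgV.
case: k k3 k_even {cx} => [|[|[|[|k]]]] // _ _ r.
by rewrite -(eqP r) eqxx in x1.
Qed.

Lemma card_anticode3_le C : anticode C 3 -> #|C| <= 2 * (n - 1).
Proof.
move=> hC; pose Cp b := [set x in C | odd #|inv_set x| == b].
have Cp_bound b : #|Cp b| <= n.-1.
  apply: card_anticode_parity => [x y|x y];
    rewrite !inE => /andP [xC /eqP hx] /andP [yC /eqP hy]; [exact: hC | by rewrite hx hy].
have : C \subset Cp true :|: Cp false.
  by apply/subsetP => x xC; rewrite !inE xC; case: (odd _).
move=> /subset_leq_card; have := cardsUI (Cp true) (Cp false).
have := Cp_bound true; have := Cp_bound false; lia.
Qed.

End AnticodeBound.

Lemma card_adj_step1_ge n : n.-1 <= #|[set x : 'S_n | adj_step 1 x]|.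
Proof.
case: n => [|m] //=.
pose f (k : 'I_m) : 'S_m.+1 := tperm (widen_ord (leqnSn m) k) (lift ord0 k).
have f_inv k : inv_set (f k) = [set (widen_ord (leqnSn m) k, lift ord0 k)].
  exact: inv_set_tperm.
have f_inj : injective f.
  move=> k k' /(congr1 (@inv_set _)); rewrite !f_inv => /set1_inj [e _].
  exact: val_inj e.
rewrite -[m in m <= _]card_ord -(card_imset _ f_inj).
apply/subset_leq_card/subsetP => _ /imsetP [k _ ->]; rewrite inE.
by apply/adj_stepP; exists (widen_ord (leqnSn m) k), (lift ord0 k); rewrite mulg1.
Qed.

Section TwoBalls.
Local Open Scope group_scope.
Variable n : nat.
Implicit Types (x y g : 'S_n).

Lemma anticode_ball1_mulr g : reach 1 1 g ->
  anticode (kball n 1 :|: [set s * g | s in kball n 1]) 3.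
Proof.
move=> g1.
have near x : x \in kball n 1 :|: [set s * g | s in kball n 1] ->
    exists2 w, w \in [set 1; g] & exists2 k, k <= 1 & reach k w x.
  case/setUP => [|/imsetP [s + ->]]; rewrite inE => /kendall_leP [k k1 r].
    by exists 1; [rewrite set21 | exists k].
  exists g; first by rewrite set22.
  by exists k => //; have := reach_mulr g r; rewrite mul1g.
have between w w' :
    w \in [set 1; g] -> w' \in [set 1; g] -> exists2 d, d <= 1 & reach d w w'.
  move=> /set2P [] -> /set2P [] ->; try by exists 0 => //=.
    by exists 1%N.
  by exists 1%N => //; apply: reach_sym.
move=> x y /near [w wA [k k1 wx]] /near [w' wA' [k' k1' w'y]].
have [d d1 ww'] := between _ _ wA wA'.
apply/kendall_leP; exists (k + (d + k')); first lia.
exact: reach_cat (reach_sym wx) (reach_cat ww' w'y).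
Qed.

Lemma card_ball1_mulr g : adj_step 1 g ->
  2 * (n - 1) <= #|kball n 1 :|: [set s * g | s in kball n 1]|.
Proof.
move=> g1; set T := [set x : 'S_n | adj_step 1 x].
have T_ball : T \subset kball n 1.
  by apply/subsetP => x; rewrite !inE => /reach1 x1; apply/kendall_leP; exists 1%N.
have T_odd x : x \in T -> odd #|inv_set x|.
  by rewrite inE => /reach1 /odd_inv_set_reach ->; rewrite inv_set1 cards0.
have Tg_even x : x \in T -> ~~ odd #|inv_set (x * g)|.
  rewrite inE => /reach1 /(reach_mulr g); rewrite mul1g => /(reach_cat (reach1 g1)).
  by move=> /odd_inv_set_reach ->; rewrite inv_set1 cards0.
have disj : T :&: [set x * g | x in T] = set0.
  apply/setP => y; rewrite in_setI in_set0; apply/negbTE/andP => -[yT /imsetP [x xT eyx]].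
  by move: (T_odd _ yT); rewrite eyx (negbTE (Tg_even _ xT)).
have TA : T :|: [set x * g | x in T] \subset kball n 1 :|: [set s * g | s in kball n 1].
  by apply: setUSS => //; apply: imsetS.
have cTg : #|[set x * g | x in T]| = #|T| := card_imset _ (mulIg g).
apply: leq_trans (subset_leq_card TA); rewrite cardsU disj cards0 subn0 cTg.
have := card_adj_step1_ge n; rewrite -/T; lia.
Qed.

End TwoBalls.

Theorem theorem7 (n : nat) (hn : 4 <= n) (i1 i2 : 'I_n)
  (h1 : nat_of_ord i1 = 0%N) (h2 : nat_of_ord i2 = 1%N) :
  let A := kball n 1 :|: [set (s * tperm i1 i2)%g | s in kball n 1] in
  optimal_anticode A 3 /\ #|A| = (2 * (n - 1))%N.
Proof.
move=> A; have tau1 : adj_step 1 (tperm i1 i2).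
  by apply/adj_stepP; exists i1, i2; rewrite h1 h2 mulg1.
have A_anticode : anticode A 3 := anticode_ball1_mulr (reach1 tau1).
have A_ge : 2 * (n - 1) <= #|A| := card_ball1_mulr tau1.
split; last by apply/eqP; rewrite eqn_leq A_ge card_anticode3_le.
split => // B /(card_anticode3_le hn) B_le; exact: leq_trans B_le A_ge.
Qed.
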